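(* Let $x_1,\dots,x_n\in\mathbb{R}^p$, let $T\subset\{1,\dots,p\}$ with $|T|=s\geqslant1$, fix $c>1$ and let $\bar c=(c+1)/(c-1)$. Then for any integer $m>0$, $$\kappa_{\bar c}\geqslant\kappa(m)\Big(1-\mu(m)\,\bar c\sqrt{\frac sm}\Big).$$
   Context: $\|\delta\|_{2,n}=\sqrt{n^{-1}\sum_{i=1}^n(x_i'\delta)^2}$; for $A\subset\{1,\dots,p\}$, $\delta_A$ is $\delta$ with entries outside $A$ set to zero, and $T^c$ is the complement of $T$. Restricted eigenvalue: $\kappa_{\bar c}=\min\{\sqrt s\|\delta\|_{2,n}/\|\delta_T\|_1:\ \|\delta_{T^c}\|_1\leqslant\bar c\|\delta_T\|_1,\ \delta_T\neq0\}$. Sparse eigenvalues: $\kappa(m)^2=\min$ and $\phi(m)=\max$ of $\|\delta\|_{2,n}^2/\|\delta\|^2$ over $\delta\neq0$ with $\|\delta_{T^c}\|_0\leqslant m$ (number of nonzero entries outside $T$ at most $m$), and $\mu(m)=\sqrt{\phi(m)}/\kappa(m)$, so that $\kappa(m)\mu(m)=\sqrt{\phi(m)}$. *)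

From HB Require Import structures.
From mathcomp Require Import all_boot all_order all_algebra.
From mathcomp Require Import classical_sets reals.
Set Implicit Arguments. Unset Strict Implicit. Unset Printing Implicit Defensive.
Import Order.TTheory GRing.Theory Num.Theory.
Local Open Scope classical_set_scope.
Local Open Scope ring_scope.

Section Defs.
Variables (R : realType) (n p : nat).
(* design: X i j = j-th coordinate of x_i, i < n, j < p *)
Variable X : 'I_n -> 'I_p -> R.

Definition norm2n (d : 'I_p -> R) : R :=
  Num.sqrt (n%:R^-1 * \sum_(i < n) (\sum_(j < p) X i j * d j) ^+ 2).

Definition restr (A : {set 'I_p}) (d : 'I_p -> R) : 'I_p -> R :=
  fun j => if j \in A then d j else 0.

Definition l1 (d : 'I_p -> R) : R := \sum_(j < p) `|d j|.
Definition l2 (d : 'I_p -> R) : R := Num.sqrt (\sum_(j < p) d j ^+ 2).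
Definition l0 (d : 'I_p -> R) : nat := #|[set j | d j != 0]|.

(* restricted eigenvalue kappa_{cbar} (minimum taken as infimum) *)
Definition kappa_re (T : {set 'I_p}) (cb : R) : R :=
  inf [set r | exists d : 'I_p -> R,
        [/\ l1 (restr (~: T) d) <= cb * l1 (restr T d),
            restr T d <> (fun _ => 0) &
            r = Num.sqrt (#|T|%:R) * norm2n d / l1 (restr T d)]].

Definition kappa_sp (T : {set 'I_p}) (m : nat) : R :=
  Num.sqrt (inf [set r | exists d : 'I_p -> R,
        [/\ d <> (fun _ => 0), (l0 (restr (~: T) d) <= m)%N &
            r = norm2n d ^+ 2 / l2 d ^+ 2]]).

Definition phi_sp (T : {set 'I_p}) (m : nat) : R :=
  sup [set r | exists d : 'I_p -> R,
        [/\ d <> (fun _ => 0), (l0 (restr (~: T) d) <= m)%N &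
            r = norm2n d ^+ 2 / l2 d ^+ 2]].

Definition mu_sp (T : {set 'I_p}) (m : nat) : R :=
  Num.sqrt (phi_sp T m) / kappa_sp T m.
End Defs.

From HB Require Import structures.
From mathcomp Require Import all_boot all_order all_algebra.
From mathcomp Require Import classical_sets reals.
From mathcomp Require Import ring lra zify.
Set Implicit Arguments. Unset Strict Implicit. Unset Printing Implicit Defensive.
Import Order.TTheory GRing.Theory Num.Theory.
Local Open Scope ring_scope.

(* Split a cone vector [d] into [u], its restriction to [T] together with the
   set [B] of the [m] largest entries of [d] off [T], and the remainder [w].
   The sparse lower eigenvalue gives [kappa(m) |u|_2 <= |u|_{2,n} <=
   |d|_{2,n} + |w|_{2,n}].  Cutting [w] into successive blocks of [m] entries
   of decreasing size, the entries of each block are bounded by the mean of the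
   previous one, so the sparse upper eigenvalue gives [|w|_{2,n} <=
   sqrt(phi(m)) |d_{T^c}|_1 / sqrt m <= sqrt(phi(m)) cbar |d_T|_1 / sqrt m];
   finally [|d_T|_1 <= sqrt s |u|_2]. *)

Section CauchySchwarz.
Variables (R : realDomainType) (I : finType) (P : pred I).

Lemma sum_sqr_ge0 (a : I -> R) : 0 <= \sum_(i | P i) a i ^+ 2.
Proof. by apply: sumr_ge0 => i _; exact: sqr_ge0. Qed.

(* Lagrange's identity: twice the gap is the sum of all [(a_i b_j - a_j b_i)^2]. *)
Lemma sum_CauchySchwarz (a b : I -> R) :
  (\sum_(i | P i) a i * b i) ^+ 2 <=
  (\sum_(i | P i) a i ^+ 2) * (\sum_(i | P i) b i ^+ 2).
Proof.
have gap_ge0 : 0 <= \sum_(i | P i) \sum_(j | P j) (a i * b j - a j * b i) ^+ 2.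
  by apply: sumr_ge0 => i _; exact: sum_sqr_ge0.
have gapE : \sum_(i | P i) \sum_(j | P j) (a i * b j - a j * b i) ^+ 2 =
   \sum_(i | P i) \sum_(j | P j) (a i ^+ 2 * b j ^+ 2)
   + \sum_(i | P i) \sum_(j | P j) (a j ^+ 2 * b i ^+ 2)
   - (\sum_(i | P i) \sum_(j | P j) ((a i * b i) * (a j * b j))) *+ 2.
  rewrite -!sumrMnl -!big_split -sumrB /=; apply: eq_bigr => i _.
  rewrite -!sumrMnl -!big_split -sumrB /=; apply: eq_bigr => j _.
  ring.
move: gap_ge0; rewrite gapE -!big_distrlr /= (exchange_big _ _ _ P P) /=.
rewrite -big_distrlr /= expr2; lra.
Qed.

End CauchySchwarz.

Lemma sum_CauchySchwarz_sqrt (R : rcfType) (I : finType) (P : pred I) (a b : I -> R) :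
  `|\sum_(i | P i) a i * b i| <=
  Num.sqrt (\sum_(i | P i) a i ^+ 2) * Num.sqrt (\sum_(i | P i) b i ^+ 2).
Proof.
rewrite -sqrtrM ?sum_sqr_ge0 // -sqrtr_sqr ler_sqrt ?sum_CauchySchwarz //.
by rewrite mulr_ge0 ?sum_sqr_ge0.
Qed.

Lemma Minkowski_sqrt (R : rcfType) (I : finType) (k : R) (u v : I -> R) :
  0 <= k ->
  Num.sqrt (k * \sum_i (u i + v i) ^+ 2) <=
  Num.sqrt (k * \sum_i u i ^+ 2) + Num.sqrt (k * \sum_i v i ^+ 2).
Proof.
move=> k_ge0.
have su_ge0 := sum_sqr_ge0 predT u; have sv_ge0 := sum_sqr_ge0 predT v.
rewrite -[X in _ <= X]ger0_norm ?addr_ge0 ?sqrtr_ge0 // -sqrtr_sqr ler_sqrt ?sqr_ge0 //.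
rewrite sqrrD !sqr_sqrtr ?mulr_ge0 // !sqrtrM //.
have -> : \sum_i (u i + v i) ^+ 2 =
    \sum_i u i ^+ 2 + \sum_i v i ^+ 2 + (\sum_i u i * v i) *+ 2.
  by rewrite -sumrMnl -!big_split /=; apply: eq_bigr => i _; ring.
have uv_le : \sum_i u i * v i <=
    Num.sqrt (\sum_i u i ^+ 2) * Num.sqrt (\sum_i v i ^+ 2).
  exact: le_trans (ler_norm _) (sum_CauchySchwarz_sqrt predT u v).
have sk_ge0 := sqrtr_ge0 k; have sk2 := sqr_sqrtr k_ge0.
nra.
Qed.

Section TopBlock.
Variables (R : realDomainType) (I : finType) (v : I -> R).

Lemma top_subset (S : {set I}) k : (k <= #|S|)%N ->
  exists B : {set I}, [/\ B \subset S, #|B| = k &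
    forall j j', j \in B -> j' \in S :\: B -> `|v j'| <= `|v j|].
Proof.
elim: k => [_|k IH lt_kS].
  exists finset.set0; split; [exact: finset.sub0set | exact: cards0 |].
  by move=> j j'; rewrite inE.
have [B [sBS cardB topB]] := IH (ltnW lt_kS).
have : (0 < #|S :\: B|)%N by rewrite cardsD (finset.setIidPr sBS) cardB subn_gt0.
case/card_gt0P => j1 j1SB.
case: (arg_maxP (fun j => `|v j|) j1SB) => j0 j0SB maxj0.
have {}maxj0 j : j \in S :\: B -> `|v j| <= `|v j0| := maxj0 j.
have : j0 \in S :\: B := j0SB; rewrite inE => /andP[j0B j0S].
exists (j0 |: B); split.
- by rewrite finset.subUset finset.sub1set j0S.
- by rewrite cardsU1 j0B cardB.
move=> j j'; rewrite !inE negb_or => jB /andP[/andP[_ j'B] j'S].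
case/orP: jB => [/eqP->|jB]; first by apply: maxj0; rewrite inE j'B.
by apply: topB; rewrite // inE j'B.
Qed.

Lemma top_block (S : {set I}) k :
  exists B : {set I}, [/\ B \subset S, #|B| = minn k #|S| &
    forall j, j \in S :\: B -> k%:R * `|v j| <= \sum_(i in B) `|v i|].
Proof.
case: (leqP k #|S|) => [le_kS|lt_Sk].
  have [B [sBS cardB topB]] := top_subset le_kS.
  exists B; split => // j jSB; rewrite -cardB mulr_natl -sumr_const.
  by apply: ler_sum => i iB; exact: topB.
by exists S; split => // j; rewrite finset.setDv inE.
Qed.

End TopBlock.

Section Design.
Variables (R : realType) (n p : nat) (X : 'I_n -> 'I_p -> R).
Implicit Types (d u w : 'I_p -> R) (A B T : {set 'I_p}).

Lemma norm2n_ge0 d : 0 <= norm2n X d.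
Proof. exact: sqrtr_ge0. Qed.

Lemma norm2n_sqr d :
  norm2n X d ^+ 2 = n%:R^-1 * \sum_(i < n) (\sum_(j < p) X i j * d j) ^+ 2.
Proof. by rewrite sqr_sqrtr // mulr_ge0 ?invr_ge0 ?ler0n ?sum_sqr_ge0. Qed.

Lemma norm2n0 : norm2n X (fun _ => 0) = 0.
Proof.
rewrite /norm2n big1 ?mulr0 ?sqrtr0 // => i _.
by rewrite big1 ?expr0n // => j _; rewrite mulr0.
Qed.

Lemma norm2nD u w : norm2n X (fun j => u j + w j) <= norm2n X u + norm2n X w.
Proof.
have sumD i : \sum_(j < p) X i j * (u j + w j) =
   \sum_(j < p) X i j * u j + \sum_(j < p) X i j * w j.
  by rewrite -big_split; apply: eq_bigr => j _; rewrite mulrDr.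
rewrite /norm2n; under eq_bigr do rewrite sumD.
by apply: Minkowski_sqrt; rewrite invr_ge0 ler0n.
Qed.

Lemma norm2nN d : norm2n X (fun j => - d j) = norm2n X d.
Proof.
rewrite /norm2n; do 2 f_equal; apply: eq_bigr => i _.
by under eq_bigr do rewrite mulrN; rewrite sumrN sqrrN.
Qed.

Lemma l1_ge0 d : 0 <= l1 d.
Proof. exact: sumr_ge0. Qed.

Lemma l2_ge0 d : 0 <= l2 d.
Proof. exact: sqrtr_ge0. Qed.

Lemma l2_sqr d : l2 d ^+ 2 = \sum_(j < p) d j ^+ 2.
Proof. by rewrite sqr_sqrtr // sum_sqr_ge0. Qed.

Lemma l2_0 : l2 (fun _ : 'I_p => 0 : R) = 0.
Proof. by rewrite /l2 big1 ?sqrtr0 // => j _; rewrite expr0n. Qed.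

Lemma nonzero_entry d : d <> (fun _ => 0) -> exists j, d j != 0.
Proof.
move=> d_neq0; case: (pickP (fun j => d j != 0)) => [j dj|d0]; first by exists j.
by exfalso; apply: d_neq0; apply: boolp.funext => j; apply/eqP; rewrite -[_ == _]negbK d0.
Qed.

Lemma l1_gt0 d : d <> (fun _ => 0) -> 0 < l1 d.
Proof.
case/nonzero_entry => j dj; rewrite /l1 (bigD1 j) //= ltr_wpDr ?normr_gt0 //.
exact: sumr_ge0.
Qed.

Lemma l2_gt0 d : d <> (fun _ => 0) -> 0 < l2 d.
Proof.
case/nonzero_entry => j dj; rewrite sqrtr_gt0 (bigD1 j) //= ltr_wpDr ?sum_sqr_ge0 //.
by rewrite exprn_even_gt0.
Qed.

Lemma l0E d : l0 d = #|[set j | d j != 0]|.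
Proof. by apply: eq_card => j; rewrite unfold_in /= boolp.asboolb inE. Qed.

Lemma restr_restr A B d : restr A (restr B d) = restr (A :&: B) d.
Proof. by apply: boolp.funext => j; rewrite /restr inE; case: (j \in A). Qed.

Lemma restr_split A d : d = (fun j => restr A d j + restr (~: A) d j).
Proof.
apply: boolp.funext => j; rewrite /restr inE.
by case: (j \in A) => /=; rewrite ?addr0 ?add0r.
Qed.

Lemma l1_restr A d : l1 (restr A d) = \sum_(j in A) `|d j|.
Proof.
rewrite /l1 [RHS]big_mkcond; apply: eq_bigr => j _; rewrite /restr.
by case: ifP; rewrite ?normr0.
Qed.

Lemma l1_split A d : l1 d = l1 (restr A d) + l1 (restr (~: A) d).
Proof.
rewrite /l1 -big_split /=; apply: eq_bigr => j _; rewrite /restr inE.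
by case: (j \in A) => /=; rewrite normr0 ?addr0 ?add0r.
Qed.

Lemma l2_sqr_restr A d : l2 (restr A d) ^+ 2 = \sum_(j in A) d j ^+ 2.
Proof.
rewrite l2_sqr [RHS]big_mkcond; apply: eq_bigr => j _; rewrite /restr.
by case: ifP; rewrite ?expr0n.
Qed.

Lemma l2_restr_le A d : l2 (restr A d) <= l2 d.
Proof.
rewrite ler_sqrt ?sum_sqr_ge0 //; apply: ler_sum => j _; rewrite /restr.
by case: ifP; rewrite ?expr0n ?sqr_ge0.
Qed.

Lemma l0_restr A d : l0 (restr A d) = #|A :&: [set j | d j != 0]|.
Proof.
rewrite l0E; apply: eq_card => j; rewrite !inE /restr.
by case: (j \in A); rewrite ?eqxx.
Qed.

Lemma l0_restr_le_card A d : (l0 (restr A d) <= #|A|)%N.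
Proof. by rewrite l0_restr subset_leq_card // finset.subsetIl. Qed.

Lemma l0_restr_le A d : (l0 (restr A d) <= l0 d)%N.
Proof. by rewrite l0_restr l0E subset_leq_card // finset.subsetIr. Qed.

Lemma l1_restr_le_sqrt_card A d :
  l1 (restr A d) <= Num.sqrt #|A|%:R * l2 (restr A d).
Proof.
have := sum_CauchySchwarz_sqrt (mem A) (fun j => `|d j|) (fun _ => 1).
under eq_bigr do rewrite mulr1.
under [X in _ <= _ * Num.sqrt X]eq_bigr do rewrite expr1n.
under [X in _ <= Num.sqrt X * _]eq_bigr do rewrite (real_normK (num_real _)).
by rewrite sumr_const ger0_norm ?sumr_ge0 // -l1_restr -l2_sqr_restr
  sqrtr_sqr ger0_norm ?l2_ge0 // mulrC.
Qed.

Lemma l2_le_sqrt_l0 w a : 0 <= a -> (forall j, `|w j| <= a) ->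
  l2 w <= Num.sqrt (l0 w)%:R * a.
Proof.
move=> a_ge0 w_le.
rewrite -ler_sqr ?nnegrE ?l2_ge0 ?mulr_ge0 ?sqrtr_ge0 //.
set S := [set j | w j != 0].
have -> : w = restr S w.
  by apply: boolp.funext => j; rewrite /restr inE; case: eqP => //= ->.
rewrite l2_sqr_restr exprMn sqr_sqrtr ?ler0n // l0_restr finset.setIid -/S.
rewrite mulr_natl -sumr_const; apply: ler_sum => j _.
by rewrite -real_normK ?num_real // ler_sqr ?nnegrE.
Qed.

Lemma kappa_sp_mul_l2_le T m d :
  (l0 (restr (~: T) d) <= m)%N -> kappa_sp X T m * l2 d <= norm2n X d.
Proof.
move=> d_sparse; rewrite /kappa_sp; set E := (X in inf X).
case: (boolp.pselect (d = fun _ => 0)) => [->|d_neq0].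
  by rewrite l2_0 mulr0 norm2n_ge0.
have Ed : E (norm2n X d ^+ 2 / l2 d ^+ 2) by exists d.
have E_ge0 : lbound E 0 by move=> r [d' [_ _ ->]]; rewrite divr_ge0 // sqr_ge0.
have inf_ge0 : 0 <= inf E := lb_le_inf (ex_intro _ _ Ed) E_ge0.
have l2_gt0d := l2_gt0 d_neq0.
rewrite -ler_sqr ?nnegrE ?mulr_ge0 ?sqrtr_ge0 ?l2_ge0 ?norm2n_ge0 //.
rewrite exprMn sqr_sqrtr // -ler_pdivlMr ?exprn_gt0 //.
exact: (ge_inf (ex_intro _ 0 E_ge0) Ed).
Qed.

(* [sup] is junk on sets without an upper bound; here Cauchy-Schwarz in each
   row bounds every ratio by [n^-1 sum_ij X_ij^2]. *)
Lemma norm2n_le_sqrt_phi_sp T m d :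
  (l0 (restr (~: T) d) <= m)%N -> norm2n X d <= Num.sqrt (phi_sp X T m) * l2 d.
Proof.
move=> d_sparse; rewrite /phi_sp; set E := (X in sup X).
case: (boolp.pselect (d = fun _ => 0)) => [->|d_neq0].
  by rewrite norm2n0 mulr_ge0 ?sqrtr_ge0 ?l2_ge0.
have Ed : E (norm2n X d ^+ 2 / l2 d ^+ 2) by exists d.
have E_ub : ubound E (n%:R^-1 * \sum_(i < n) \sum_(j < p) X i j ^+ 2).
  move=> r [d' [d'_neq0 _ ->]].
  rewrite ler_pdivrMr ?exprn_gt0 ?l2_gt0 // norm2n_sqr l2_sqr -mulrA.
  rewrite ler_wpM2l ?invr_ge0 ?ler0n // mulr_suml; apply: ler_sum => i _.
  exact: sum_CauchySchwarz.
have le_sup : norm2n X d ^+ 2 / l2 d ^+ 2 <= sup E :=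
  ub_le_sup (ex_intro _ _ E_ub) Ed.
have l2_gt0d := l2_gt0 d_neq0.
have sup_ge0 : 0 <= sup E by apply: le_trans le_sup; rewrite divr_ge0 ?sqr_ge0.
rewrite -ler_sqr ?nnegrE ?mulr_ge0 ?sqrtr_ge0 ?l2_ge0 ?norm2n_ge0 //.
by rewrite exprMn (sqr_sqrtr sup_ge0) -ler_pdivrMr ?exprn_gt0.
Qed.

Section Shelling.
Variables (s : R) (m : nat).
Hypotheses (s_ge0 : 0 <= s) (m_gt0 : (0 < m)%N)
  (norm2n_sparse_le : forall u, (l0 u <= m)%N -> norm2n X u <= s * l2 u).

Lemma norm2n_le_sparse_bounded w a : (l0 w <= m)%N -> 0 <= a ->
  (forall j, `|w j| <= a) -> norm2n X w <= s * (Num.sqrt m%:R * a).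
Proof.
move=> w_sparse a_ge0 w_le; apply: le_trans (norm2n_sparse_le w_sparse) _.
rewrite ler_wpM2l //; apply: le_trans (l2_le_sqrt_l0 a_ge0 w_le) _.
by rewrite ler_wpM2r // ler_sqrt ?ler0n // ler_nat.
Qed.

Lemma norm2n_shelling w a : 0 <= a -> (forall j, `|w j| <= a) ->
  norm2n X w <= s * (Num.sqrt m%:R * a + l1 w / Num.sqrt m%:R).
Proof.
have [k] := ubnP (l0 w); elim: k w a => // k IH w a lt_wk a_ge0 w_le.
case: (leqP (l0 w) m) => [w_sparse|lt_mw].
  apply: le_trans (norm2n_le_sparse_bounded w_sparse a_ge0 w_le) _.
  by rewrite ler_wpM2l // lerDl divr_ge0 ?l1_ge0 ?sqrtr_ge0.
set S := [set j | w j != 0].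
have [B [sBS cardB topB]] := top_block w S m.
have {}cardB : #|B| = m by rewrite cardB -l0E (minn_idPl (ltnW lt_mw)).
set u1 := restr B w; set u2 := restr (~: B) w; pose b := l1 u1 / m%:R.
have u2_le j : `|u2 j| <= b.
  rewrite /u2 /restr inE; case: ifP => jB /=; last by rewrite normr0 divr_ge0 ?l1_ge0.
  case: (eqVneq (w j) 0) => [->|wj]; first by rewrite normr0 divr_ge0 ?l1_ge0.
  by rewrite ler_pdivlMr ?ltr0n // mulrC /u1 l1_restr topB // !inE jB wj.
have lt_u2k : (l0 u2 < k)%N.
  have : (l0 u2 + m <= l0 w)%N.
    rewrite /u2 l0_restr l0E -/S -cardB -(cardsID B S) (finset.setIidPr sBS).
    by rewrite finset.setDE finset.setIC addnC.
  by move: lt_wk m_gt0; lia.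
have le_u2 := IH u2 b lt_u2k (divr_ge0 (l1_ge0 _) (ler0n _ _)) u2_le.
have le_u1 : norm2n X u1 <= s * (Num.sqrt m%:R * a).
  apply: norm2n_le_sparse_bounded => //; first by rewrite -cardB l0_restr_le_card.
  by move=> j; rewrite /u1 /restr; case: ifP; rewrite ?normr0.
have sqrtm_b : Num.sqrt m%:R * b = l1 u1 / Num.sqrt m%:R.
  rewrite /b -{2}(sqr_sqrtr (ler0n _ m)); field.
  by rewrite lt0r_neq0 // sqrtr_gt0 ltr0n.
rewrite (l1_split B w) {1}(restr_split B w) -/u1 -/u2.
apply: le_trans (norm2nD _ _) _.
rewrite sqrtm_b !mulrDr in le_u2; rewrite mulrDl !mulrDr; lra.
Qed.

End Shelling.

Lemma kappa_sp_l1_cone_le T m cb d : (0 < m)%N ->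
  l1 (restr (~: T) d) <= cb * l1 (restr T d) ->
  kappa_sp X T m * l1 (restr T d) <=
  Num.sqrt #|T|%:R * (norm2n X d +
    Num.sqrt (phi_sp X T m) * (cb * l1 (restr T d) / Num.sqrt m%:R)).
Proof.
move=> m_gt0 d_cone.
set kap := kappa_sp X T m; set sph := Num.sqrt (phi_sp X T m).
set q := Num.sqrt (m%:R : R); set t := Num.sqrt (#|T|%:R : R).
have q_gt0 : 0 < q by rewrite sqrtr_gt0 ltr0n.
have [B [sBT cardB topB]] := top_block d (~: T) m.
set u := restr (T :|: B) d; set w := restr (~: (T :|: B)) d.
have le_u : kap * l2 u <= norm2n X u.
  apply: kappa_sp_mul_l2_le; rewrite /u restr_restr finset.setIUr.
  rewrite [~: T :&: T]finset.setIC finset.setICr finset.set0U (finset.setIidPr sBT).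
  by apply: leq_trans (l0_restr_le_card _ _) _; rewrite cardB geq_minl.
have le_uw : norm2n X u <= norm2n X d + norm2n X w.
  have -> : u = (fun j => d j + - w j).
    apply: boolp.funext => j; rewrite /u /w /restr [j \in ~: _]inE.
    by case: (j \in T :|: B); rewrite ?subr0 ?subrr.
  by apply: le_trans (norm2nD _ _) _; rewrite norm2nN.
pose a := l1 (restr B d) / m%:R.
have w_le j : `|w j| <= a.
  rewrite /w /restr !inE negb_or; case: ifP => [/andP[jT jB]|_]; last first.
    by rewrite normr0 divr_ge0 ?l1_ge0.
  by rewrite ler_pdivlMr ?ltr0n // mulrC l1_restr topB // !inE jT jB.
have le_w := norm2n_shelling (sqrtr_ge0 _) m_gt0
  (fun u su => norm2n_le_sqrt_phi_sp (T := T) (leq_trans (l0_restr_le _ _) su))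
  (divr_ge0 (l1_ge0 _) (ler0n _ _)) w_le.
have split_offT : q * a + l1 w / q = l1 (restr (~: T) d) / q.
  rewrite (l1_split B (restr (~: T) d)) !restr_restr (finset.setIidPl sBT).
  rewrite -finset.setCU finset.setUC /a -(sqr_sqrtr (ler0n _ m)) -/q.
  field; exact: lt0r_neq0.
have le_T : l1 (restr T d) <= t * l2 u.
  apply: le_trans (l1_restr_le_sqrt_card _ _) _.
  rewrite ler_wpM2l ?sqrtr_ge0 //.
  have -> : restr T d = restr T u by rewrite /u restr_restr finset.setIC finset.setUK.
  exact: l2_restr_le.
rewrite split_offT in le_w.
have le_off : sph * (l1 (restr (~: T) d) / q) <= sph * (cb * l1 (restr T d) / q).
  by rewrite ler_wpM2l ?sqrtr_ge0 // ler_pM2r ?invr_gt0.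
apply: le_trans (_ : kap * (t * l2 u) <= _); first by rewrite ler_wpM2l ?sqrtr_ge0.
rewrite mulrCA ler_wpM2l ?sqrtr_ge0 //.
apply: le_trans le_u _; apply: le_trans le_uw _.
by rewrite lerD2l; exact: le_trans le_w le_off.
Qed.

Lemma kappa_sp_mul_le_cone_ratio T m cb d : (0 < m)%N ->
  l1 (restr (~: T) d) <= cb * l1 (restr T d) -> restr T d <> (fun _ => 0) ->
  kappa_sp X T m * (1 - mu_sp X T m * cb * Num.sqrt (#|T|%:R / m%:R)) <=
  Num.sqrt #|T|%:R * norm2n X d / l1 (restr T d).
Proof.
move=> m_gt0 d_cone dT_neq0.
have := kappa_sp_l1_cone_le m_gt0 d_cone.
set kap := kappa_sp X T m; set sph := Num.sqrt (phi_sp X T m).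
set q := Num.sqrt (m%:R : R); set t := Num.sqrt (#|T|%:R : R).
set L := l1 (restr T d) => le_kapL.
have L_gt0 : 0 < L := l1_gt0 dT_neq0.
have q_gt0 : 0 < q by rewrite sqrtr_gt0 ltr0n.
have -> : Num.sqrt (#|T|%:R / m%:R) = t / q by rewrite sqrtrM ?ler0n // sqrtrV.
case: (eqVneq kap 0) => [->|kap_neq0].
  by rewrite mul0r divr_ge0 ?mulr_ge0 ?sqrtr_ge0 ?norm2n_ge0 ?ltW.
rewrite /mu_sp -/sph -/kap ler_pdivlMr //.
have -> : kap * (1 - sph / kap * cb * (t / q)) * L =
    kap * L - t * (sph * (cb * L / q)).
  by field; rewrite kap_neq0 lt0r_neq0.
lra.
Qed.

End Design.

Theorem lemma10 (R : realType) (n p : nat) (X : 'I_n -> 'I_p -> R)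
  (T : {set 'I_p}) (hs : (0 < #|T|)%N) (c : R) (hc : 1 < c)
  (m : nat) (hm : (0 < m)%N) :
  let cb := (c + 1) / (c - 1) in
  kappa_sp X T m * (1 - mu_sp X T m * cb * Num.sqrt (#|T|%:R / m%:R))
    <= kappa_re X T cb.
Proof.
cbv zeta; set cb := (c + 1) / (c - 1); apply: lb_le_inf; last first.
  by move=> _ [d [d_cone dT_neq0 ->]]; exact: kappa_sp_mul_le_cone_ratio.
have [j0 j0T] := card_gt0P hs.
pose indT := fun j : 'I_p => if j \in T then 1 else 0 : R.
have indT_offT : restr (~: T) indT = fun _ => 0.
  by apply: boolp.funext => j; rewrite /restr /indT inE; case: (j \in T).
have indT_neq0 : restr T indT <> (fun _ => 0).
  by move=> /(congr1 (fun f => f j0)); rewrite /restr /indT j0T; apply/eqP/oner_neq0.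
have cb_ge0 : 0 <= cb by rewrite divr_ge0 // ?subr_ge0; lra.
eexists; exists indT; split => //.
by rewrite indT_offT /l1 big1 ?normr0 // mulr_ge0 ?l1_ge0.
Qed.
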